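(* Let $T$ be an ultrametric tree of radius $1$, let $U$ be a nonempty upper subtree of $T$, and let $M$ be the set of minimal elements of $U$. For each $i\in M$ let $n_i$ be the number of leaves of $T$ that are descendants of $i$ (counting $i$ itself if it is a leaf), and set $n=\sum_{i\in M}n_i$. Then the symmetric matrix $A^{T,U}$ with rows and columns indexed by $M$ and entries \[ A^{T,U}_{ij}=\begin{cases}\big(1-\tfrac1n\big)-H(i\vee j), & i\ne j,\\[2pt] \big(1-\tfrac1n\big)-\big(1-\tfrac1{n_i}\big)H(i), & i=j,\end{cases} \] is positive semidefinite.
   Context: An ultrametric tree is a rooted tree with nonnegative edge lengths such that all leaves have the same distance (sum of edge lengths along the path) from the root; this common distance is the radius. The height $H(v)$ of a vertex $v$ is the distance from $v$ to its furthest descendant (equivalently, to any leaf below it). For distinct vertices $i,j$, $i\vee j$ denotes their lowest common ancestor, the unique vertex lying on all three paths connecting the root, $i$ and $j$. Regard $T$ as a poset with the root as maximum (ancestors above descendants); an upper subtree is a set $U$ of vertices such that every ancestor of a vertex of $U$ lies in $U$, and its minimal elements are the vertices of $U$ none of whose children lie in $U$. *)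

From HB Require Import structures.
From mathcomp Require Import all_boot all_order all_algebra.
Set Implicit Arguments. Unset Strict Implicit. Unset Printing Implicit Defensive.
Import Order.TTheory GRing.Theory Num.Theory.
Local Open Scope ring_scope.

(* A finite rooted tree on the vertex type V is given by a root and a parent
   map [par] (with [par root = root]); [len v] is the length of the edge
   from v to its parent (irrelevant for v = root). *)

(* u is an ancestor of v (u >= v in the tree poset; reflexive). *)
Definition anc (V : finType) (par : V -> V) (u v : V) : bool :=
  [exists k : 'I_#|V|.+1, iter k par v == u].

Definition is_rooted_tree (V : finType) (root : V) (par : V -> V) : Prop :=
  par root = root /\ forall v, anc par root v.

Definition child (V : finType) (root : V) (par : V -> V) (w v : V) : bool :=
  (par w == v) && (w != root).

Definition leaf (V : finType) (root : V) (par : V -> V) (v : V) : bool :=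
  [forall w, ~~ child root par w v].

Definition depth (R : realFieldType) (V : finType) (root : V) (par : V -> V)
  (len : V -> R) (v : V) : R :=
  \sum_(k < #|V|) (if iter k par v == root then 0 else len (iter k par v)).

Definition height (R : realFieldType) (V : finType) (root : V) (par : V -> V)
  (len : V -> R) (v : V) : R :=
  \big[Num.max/0]_(w | anc par v w) (depth root par len w - depth root par len v).

Definition lca (V : finType) (root : V) (par : V -> V) (i j : V) : V :=
  odflt root [pick w | anc par w i && anc par w j &&
     [forall w', (anc par w' i && anc par w' j) ==> anc par w' w]].

Definition ultrametric_radius1 (R : realFieldType) (V : finType) (root : V)
  (par : V -> V) (len : V -> R) : Prop :=
  is_rooted_tree root par /\ (forall v, 0 <= len v) /\
  (forall l, leaf root par l -> depth root par len l = 1).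

Definition upper_subtree (V : finType) (par : V -> V) (U : {set V}) : Prop :=
  forall u v, v \in U -> anc par u v -> u \in U.

Definition minimal_elems (V : finType) (root : V) (par : V -> V) (U : {set V})
  : {set V} :=
  [set v in U | [forall w, child root par w v ==> (w \notin U)]].

Definition nleaves (V : finType) (root : V) (par : V -> V) (i : V) : nat :=
  #|[set l | leaf root par l && anc par i l]|.

Definition ntot (V : finType) (root : V) (par : V -> V) (U : {set V}) : nat :=
  \sum_(i in minimal_elems root par U) nleaves root par i.

Definition ATU_entry (R : realFieldType) (V : finType) (root : V)
  (par : V -> V) (len : V -> R) (U : {set V}) (i j : V) : R :=
  let n := (ntot root par U)%:R in
  if i == j then (1 - n^-1) - (1 - ((nleaves root par i)%:R)^-1) * height root par len i
  else (1 - n^-1) - height root par len (lca root par i j).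

Definition ATU (R : realFieldType) (V : finType) (root : V)
  (par : V -> V) (len : V -> R) (U : {set V}) :
  'M[R]_#|minimal_elems root par U| :=
  \matrix_(a, b) ATU_entry root par len U (enum_val a) (enum_val b).

Definition psd (R : realFieldType) (m : nat) (A : 'M[R]_m) : Prop :=
  forall x : 'cV[R]_m, 0 <= (x^T *m A *m x) 0 0.

From mathcomp Require Import all_boot all_order all_algebra.
Set Implicit Arguments. Unset Strict Implicit. Unset Printing Implicit Defensive.
Import Order.TTheory GRing.Theory Num.Theory.
From mathcomp Require Import ring.

Local Open Scope ring_scope.

(* Let c_e be the length of the edge above e, so that depth v = sum_(e >= v) c_e
   and, the radius being 1, H v = 1 - depth v.  Then
     A = sum_e c_e u_e u_e^T + diag (H i / n_i) - J / n,
   where u_e is the indicator of the minimal elements below e, and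
   sum_(e >= i) c_e + H i = 1 for every i.  This partition of unity writes both
   S = sum_i y_i and n = sum_i n_i as combinations with weights c_e and H i;
   comparing them term by term with the tangent-line bounds
   s^2 >= 2 t s - t^2 b (for b >= 1) and y^2 / n_i >= 2 t y - t^2 n_i gives
   y^T (A + J / n) y >= 2 t S - t^2 n, and t = S / n yields y^T A y >= 0. *)

Lemma tangent_le_sqr_div (R : realFieldType) (y t w : R) :
  0 < w -> 2 * t * y - t ^+ 2 * w <= y ^+ 2 / w.
Proof.
move=> w_gt0; rewrite -subr_ge0.
have -> : y ^+ 2 / w - (2 * t * y - t ^+ 2 * w) = (y - t * w) ^+ 2 / w.
  by field; rewrite gt_eqF.
by rewrite divr_ge0 ?sqr_ge0 ?ltW.
Qed.

Lemma tangent_le_sqr (R : realFieldType) (s t b : R) :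
  1 <= b -> 2 * t * s - t ^+ 2 * b <= s ^+ 2.
Proof.
move=> b_ge1; apply: le_trans (tangent_le_sqr_div _ _ (lt_le_trans ltr01 b_ge1)) _.
by rewrite ler_pdivrMr ?(lt_le_trans ltr01) // ler_peMr ?sqr_ge0.
Qed.

Lemma sum_rank1_form (R : comNzRingType) (m : nat) (u y : 'I_m -> R) :
  \sum_a \sum_b y a * (u a * u b) * y b = (\sum_a u a * y a) ^+ 2.
Proof.
rewrite expr2 big_distrlr /=; apply: eq_bigr => a _; apply: eq_bigr => b _.
by rewrite mulrCA !mulrA mulrAC.
Qed.

Lemma mxquadE (R : comNzRingType) (m : nat) (A : 'M[R]_m) (x : 'cV[R]_m) :
  (x^T *m A *m x) 0 0 = \sum_a \sum_b x a 0 * A a b * x b 0.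
Proof.
rewrite mxE exchange_big; apply: eq_bigr => b _; rewrite mxE big_distrl /=.
by apply: eq_bigr => a _; rewrite mxE.
Qed.

Section PartitionOfUnityPsd.
Variables (R : realFieldType) (m : nat) (E : finType).
Variables (c : E -> R) (inc : E -> 'I_m -> bool) (h w : 'I_m -> R).
Hypotheses (c_ge0 : forall e, 0 <= c e) (h_ge0 : forall a, 0 <= h a).
Hypothesis w_ge1 : forall a, 1 <= w a.
Hypothesis partition1 : forall a, \sum_e c e * (inc e a)%:R + h a = 1.

Let w_gt0 a : 0 < w a := lt_le_trans ltr01 (w_ge1 a).

Local Notation sum_below e f := (\sum_a (inc e a)%:R * f a).

Lemma sum_partition1 (f : 'I_m -> R) :
  \sum_a f a = \sum_e c e * sum_below e f + \sum_a h a * f a.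
Proof.
have -> : \sum_e c e * sum_below e f = \sum_e \sum_a c e * (inc e a)%:R * f a.
  by apply: eq_bigr => e _; rewrite mulr_sumr; apply: eq_bigr => a _; rewrite mulrA.
rewrite exchange_big -big_split /=; apply: eq_bigr => a _.
transitivity ((\sum_e c e * (inc e a)%:R + h a) * f a).
  by rewrite partition1 mul1r.
by rewrite mulrDl big_distrl.
Qed.

Lemma tangent_bound (y : 'I_m -> R) (t : R) :
  2 * t * \sum_a y a - t ^+ 2 * \sum_a w a <=
  \sum_e c e * sum_below e y ^+ 2 + \sum_a h a / w a * y a ^+ 2.
Proof.
rewrite (sum_partition1 y) (sum_partition1 w).
have -> : forall (p q r s : R), 2 * t * (p + q) - t ^+ 2 * (r + s) =
    (2 * t * p - t ^+ 2 * r) + (2 * t * q - t ^+ 2 * s) by move=> *; ring.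
rewrite !mulr_sumr -!sumrB; apply: lerD; apply: ler_sum.
- move=> e _.
  have -> : 2 * t * (c e * sum_below e y) - t ^+ 2 * (c e * sum_below e w) =
      c e * (2 * t * sum_below e y - t ^+ 2 * sum_below e w) by ring.
  apply: ler_wpM2l => //.
  have [none | /forallPn [a0]] := boolP [forall a, ~~ inc e a].
    rewrite !big1 ?mulr0 ?subrr ?expr0n // => a _;
      by move/forallP: none => /(_ a) /negbTE ->; rewrite mul0r.
  rewrite negbK => inc_a0; apply: tangent_le_sqr.
  rewrite (bigD1 a0) //= inc_a0 mul1r; apply: le_trans (w_ge1 a0) _.
  by rewrite lerDl sumr_ge0 // => a _; rewrite mulr_ge0 ?ler0n ?ltW.
- move=> a _.
  have -> : 2 * t * (h a * y a) - t ^+ 2 * (h a * w a) =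
      h a * (2 * t * y a - t ^+ 2 * w a) by ring.
  rewrite -[h a / w a * _]mulrA [_^-1 * _]mulrC; apply: ler_wpM2l => //.
  exact: tangent_le_sqr_div.
Qed.

Variable A : 'M[R]_m.
Hypothesis partition_matrix : forall a b, A a b =
  \sum_e c e * ((inc e a)%:R * (inc e b)%:R) - (\sum_i w i)^-1
  + (a == b)%:R * (h a / w a).

Lemma mxquad_partition1E (x : 'cV[R]_m) : let y a := x a 0 in
  (x^T *m A *m x) 0 0 = \sum_e c e * sum_below e y ^+ 2
    + \sum_a h a / w a * y a ^+ 2 - (\sum_i w i)^-1 * (\sum_a y a) ^+ 2.
Proof.
move=> y; rewrite mxquadE.
under eq_bigr => a _ do under eq_bigr => b _ do
  rewrite partition_matrix !mulrDr !mulrDl.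
under eq_bigr => a _ do rewrite !big_split /=.
rewrite !big_split /=.
have -> : \sum_a \sum_b x a 0 * (\sum_e c e * ((inc e a)%:R * (inc e b)%:R)) * x b 0
    = \sum_e c e * sum_below e y ^+ 2.
  under eq_bigr => a _ do under eq_bigr => b _ do rewrite mulr_sumr mulr_suml.
  under eq_bigr => a _ do rewrite exchange_big /=.
  rewrite exchange_big /=; apply: eq_bigr => e _.
  rewrite -sum_rank1_form mulr_sumr; apply: eq_bigr => a _.
  by rewrite mulr_sumr; apply: eq_bigr => b _; rewrite /y; ring.
have -> : \sum_a \sum_b x a 0 * - (\sum_i w i)^-1 * x b 0
    = - ((\sum_i w i)^-1 * (\sum_a y a) ^+ 2).
  rewrite -(eq_bigr _ (fun a _ => mul1r (y a))) -sum_rank1_form mulr_sumr -sumrN.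
  apply: eq_bigr => a _; rewrite mulr_sumr -sumrN.
  by apply: eq_bigr => b _; rewrite /y; ring.
have -> : \sum_a \sum_b x a 0 * ((a == b)%:R * (h a / w a)) * x b 0
    = \sum_a h a / w a * y a ^+ 2.
  apply: eq_bigr => a _; rewrite (bigD1 a) //= eqxx mulr1n big1 => [|b b_neq_a].
    by rewrite /y; ring.
  by rewrite eq_sym (negbTE b_neq_a) mul0r mulr0 mul0r.
by ring.
Qed.

Lemma psd_partition1 : psd A.
Proof.
move=> x; rewrite mxquad_partition1E subr_ge0.
set n := \sum_i w i; set S := \sum_a x a 0.
have [n0 | n_neq0] := eqVneq n 0.
  (* only for the empty matrix, where [0^-1 = 0] *)
  rewrite n0 invr0 mul0r.
  by have := tangent_bound (fun a => x a 0) 0; rewrite !(mul0r, mulr0, expr0n) subr0.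
have -> : n^-1 * S ^+ 2 = 2 * (S / n) * S - (S / n) ^+ 2 * n by field.
exact: tangent_bound.
Qed.

End PartitionOfUnityPsd.

Section RootedTree.
Variables (V : finType) (root : V) (par : V -> V).
Hypothesis tree : is_rooted_tree root par.

Lemma iter_par_root k : iter k par root = root.
Proof. by apply: iter_fix; case: tree. Qed.

Lemma iter_par_card k v : (#|V| <= k)%N -> iter k par v = root.
Proof.
move=> le_V_k; case: tree => _ /(_ v) /existsP [j /eqP j_root].
have le_jk : (j <= k)%N by apply: leq_trans le_V_k; rewrite -ltnS.
by rewrite -(subnK le_jk) iterD j_root iter_par_root.
Qed.

Lemma ancP u v : reflect (exists k, iter k par v = u) (anc par u v).
Proof.
apply: (iffP existsP) => [[k /eqP <-] | [k <-]]; first by exists k.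
have [lt_k_V | le_V_k] := ltnP k #|V|.+1; first by exists (Ordinal lt_k_V).
case: tree => _ /(_ v) /existsP [j j_root]; exists j.
by rewrite (iter_par_card _ (ltnW le_V_k)).
Qed.

Lemma anc_refl v : anc par v v.
Proof. by apply/ancP; exists 0%N. Qed.

Lemma anc_trans u v w : anc par u v -> anc par v w -> anc par u w.
Proof.
move=> /ancP [k1 <-] /ancP [k2 <-]; apply/ancP; exists (k1 + k2)%N.
by rewrite iterD.
Qed.

Lemma anc_par v : anc par (par v) v.
Proof. by apply/ancP; exists 1%N. Qed.

Lemma anc_root e : anc par e root -> e = root.
Proof. by move=> /ancP [k <-]; rewrite iter_par_root. Qed.

Lemma ancS e v : anc par e v = (e == v) || anc par e (par v).
Proof.
apply/idP/orP => [/ancP [[|k] <-] | [/eqP -> | e_par_v]].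
- by left.
- by right; apply/ancP; exists k; rewrite iterSr.
- exact: anc_refl.
- exact: anc_trans e_par_v (anc_par v).
Qed.

Lemma anc_parN v : v != root -> ~~ anc par v (par v).
Proof.
move=> v_neq_root; apply/negP => /ancP [k cycle_k].
have iter_cycle n : iter (n * k.+1) par v = v.
  by elim: n => // n IHn; rewrite mulSn iterD IHn iterSr.
move: v_neq_root; rewrite -(iter_cycle #|V|) iter_par_card ?eqxx //.
by rewrite leq_pmulr.
Qed.

Lemma desc_child_proper w v : child root par w v ->
  [set u | anc par w u] \proper [set u | anc par v u].
Proof.
move=> /andP [/eqP <- w_neq_root]; apply/properP; split.
  by apply/subsetP => u; rewrite !inE; apply: anc_trans (anc_par w).
by exists (par w); rewrite !inE ?anc_refl ?anc_parN.
Qed.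

Lemma leaf_below v : exists2 l, leaf root par l & anc par v l.
Proof.
move: {2}#|_| (leqnn #|[set u | anc par v u]|) => k.
elim: k v => [|k IHk] v le_desc_k.
  by move: le_desc_k; rewrite leqn0 => /eqP/cards0_eq/setP/(_ v); rewrite !inE anc_refl.
have [v_leaf | /forallPn [w]] := boolP (leaf root par v).
  by exists v => //; exact: anc_refl.
rewrite negbK => w_child_v.
have [|l l_leaf w_l] := IHk w.
  by rewrite -ltnS; apply: leq_trans le_desc_k; apply/proper_card/desc_child_proper.
exists l => //; apply: anc_trans w_l.
by move/andP: w_child_v => [/eqP <- _]; exact: anc_par.
Qed.

Lemma nleaves_gt0 v : (0 < nleaves root par v)%N.
Proof.
by have [l l_leaf v_l] := leaf_below v; apply/card_gt0P; exists l; rewrite inE l_leaf.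
Qed.

Lemma lcaP i j e : anc par e (lca root par i j) = anc par e i && anc par e j.
Proof.
have ex_common : exists k, anc par (iter k par i) j.
  by exists #|V|; rewrite iter_par_card //; case: tree => _; apply.
have [w w_lca] : exists w, anc par w i && anc par w j &&
    [forall w', (anc par w' i && anc par w' j) ==> anc par w' w].
  have [k k_j k_min] := ex_minnP ex_common; exists (iter k par i).
  rewrite k_j andbT; apply/andP; split; first by apply/ancP; exists k.
  apply/forallP => w'; apply/implyP => /andP [/ancP [k' <-] k'_j].
  have le_kk' : (k <= k')%N := k_min _ k'_j.
  by apply/ancP; exists (k' - k)%N; rewrite -iterD subnK.
rewrite /lca; case: pickP => [w' | /(_ w)]; last by rewrite w_lca.
move=> /andP [/andP [w'_i w'_j] /forallP w'_lowest].
apply/idP/idP => [e_w' | /(implyP (w'_lowest e)) //].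
by rewrite (anc_trans e_w' w'_i) (anc_trans e_w' w'_j).
Qed.

Variables (R : realFieldType) (len : V -> R).

Definition edge_len (e : V) : R := if e == root then 0 else len e.

Lemma depth_par v : depth root par len v = edge_len v + depth root par len (par v).
Proof.
have : (0 < #|V|)%N by apply/card_gt0P; exists root.
rewrite /depth; case: #|V| (@iter_par_card) => // N iterN _.
rewrite big_ord_recl big_ord_recr /= -iterSr iterN // eqxx addr0.
congr (_ + _); apply: eq_bigr => i _; by rewrite -iterS iterSr.
Qed.

Lemma depthE v : depth root par len v = \sum_e edge_len e * (anc par e v)%:R.
Proof.
have at_root : depth root par len root = \sum_e edge_len e * (anc par e root)%:R.
  rewrite /depth !big1 // => [e _ | i _]; last by rewrite iter_par_root eqxx.
  case: (boolP (anc par e root)) => [/anc_root -> | _]; last by rewrite mulr0.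
  by rewrite /edge_len eqxx mul0r.
case: tree => _ /(_ v) /ancP [k]; elim: k v => [|k IHk] v; first by move=> /= ->.
have [-> // | v_neq_root] := eqVneq v root.
rewrite iterSr => /IHk par_v_E.
rewrite depth_par par_v_E [RHS](bigD1 v) //= anc_refl mulr1.
congr (_ + _); rewrite [LHS](bigD1 v) //= (negbTE (anc_parN v_neq_root)) mulr0 add0r.
by apply: eq_bigr => e e_neq_v; rewrite [anc par e v]ancS (negbTE e_neq_v).
Qed.

Lemma depth_lca i j : depth root par len (lca root par i j) =
  \sum_e edge_len e * ((anc par e i)%:R * (anc par e j)%:R).
Proof. by rewrite depthE; apply: eq_bigr => e _; rewrite lcaP -natrM mulnb. Qed.

Hypothesis len_ge0 : forall v, 0 <= len v.
Hypothesis depth_leaf : forall l, leaf root par l -> depth root par len l = 1.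

Lemma edge_len_ge0 e : 0 <= edge_len e.
Proof. by rewrite /edge_len; case: ifP. Qed.

Lemma le_depth_anc w v : anc par w v -> depth root par len w <= depth root par len v.
Proof.
move=> w_v; rewrite !depthE; apply: ler_sum => e _.
apply: ler_wpM2l; first exact: edge_len_ge0.
by case e_w: (anc par e w); rewrite ?(anc_trans e_w w_v).
Qed.

Lemma depth_le1 v : depth root par len v <= 1.
Proof. by have [l /depth_leaf <- v_l] := leaf_below v; exact: le_depth_anc. Qed.

Lemma heightE v : height root par len v = 1 - depth root par len v.
Proof.
apply/le_anti/andP; split.
  apply: bigmax_le => [|w _]; first by rewrite subr_ge0 depth_le1.
  by rewrite lerD2r depth_le1.
have [l /depth_leaf <- v_l] := leaf_below v.
exact: (le_bigmax_cond _ (fun w => depth root par len w - depth root par len v) v_l).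
Qed.

Lemma height_ge0 v : 0 <= height root par len v.
Proof. by rewrite heightE subr_ge0 depth_le1. Qed.

Lemma depth_add_height v :
  \sum_e edge_len e * (anc par e v)%:R + height root par len v = 1.
Proof. by rewrite -depthE heightE addrC subrK. Qed.

Lemma ATU_entryE U i j : ATU_entry root par len U i j =
  \sum_e edge_len e * ((anc par e i)%:R * (anc par e j)%:R)
  - (ntot root par U)%:R^-1
  + (i == j)%:R * (height root par len i / (nleaves root par i)%:R).
Proof.
rewrite /ATU_entry; have [<- | _] := eqVneq i j.
  under eq_bigr => e _ do rewrite -natrM mulnb andbb.
  by rewrite -depthE heightE mulr1n; ring.
by rewrite -depth_lca heightE mulr0n; ring.
Qed.

End RootedTree.

Theorem proposition2p2 (R : realFieldType) (V : finType) (root : V)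
  (par : V -> V) (len : V -> R) (U : {set V}) :
  ultrametric_radius1 root par len ->
  U != set0 -> upper_subtree par U ->
  psd (ATU root par len U).
Proof.
move=> [tree [len_ge0 depth_leaf]] _ _.
apply: (@psd_partition1 _ _ _ (edge_len root len)
  (fun e a => anc par e (enum_val a)) (fun a => height root par len (enum_val a))
  (fun a => (nleaves root par (enum_val a))%:R)).
- exact: edge_len_ge0.
- by move=> a; apply: height_ge0.
- by move=> a; rewrite ler1n nleaves_gt0.
- by move=> a; apply: depth_add_height.
move=> a b; rewrite mxE ATU_entryE // (inj_eq enum_val_inj).
by congr (_ - _^-1 + _); rewrite /ntot natr_sum big_enum_val.
Qed.
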